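(* Let $\mathfrak{K}$ be a 2-category, let $\mathscr{A}$ be an object of $\mathfrak{K}$, and let $T=(T,\mu,\eta)$ be a monad on $\mathscr{A}$. Let $G\dashv S$ be an adjunction between endomorphisms $G,S\colon\mathscr{A}\to\mathscr{A}$, with unit $u\colon 1_{\mathscr{A}}\Rightarrow SG$ and counit $e\colon GS\Rightarrow 1_{\mathscr{A}}$. Then adjoint mateship, given on 2-cells by $$\zeta = eTG\circ G\lambda G\circ GTu,\qquad \delta = eTGG\circ G\nu GG\circ GSuG\circ Gu,\qquad \varepsilon = eT\circ G\sigma,$$ (which is a bijection between triples of 2-cells $(\nu\colon SS\Rightarrow ST,\ \sigma\colon 1_{\mathscr{A}}\Rightarrow ST,\ \lambda\colon TS\Rightarrow ST)$ and triples $(\delta\colon G\Rightarrow TGG,\ \varepsilon\colon G\Rightarrow T,\ \zeta\colon GT\Rightarrow TG)$) restricts to a bijection between wreath structures $(\nu,\sigma,\lambda)$ on $S$ around $T$ and mixed opwreath structures $(\zeta,\delta,\varepsilon)$ on $G$ around $T$.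
   Context: Notation: composition of 1-cells is written by juxtaposition ($XY=X\circ Y$), and whiskering of a 2-cell $\alpha$ by 1-cells is written $X\alpha$, $\alpha Y$; $\circ$ between 2-cells is vertical composition. A wreath around the monad $T$ on $\mathscr{A}$ consists of an endomorphism $S$ of $\mathscr{A}$ and 2-cells $\nu\colon SS\Rightarrow ST$, $\sigma\colon 1_{\mathscr{A}}\Rightarrow ST$, $\lambda\colon TS\Rightarrow ST$ satisfying the seven axioms: (W1) $\lambda\circ\mu S = S\mu\circ\lambda T\circ T\lambda$; (W2) $\lambda\circ\eta S = S\eta$; (W3) $S\mu\circ\lambda T\circ T\sigma = S\mu\circ\sigma T$; (W4) $S\mu\circ\nu T\circ S\lambda\circ\lambda S = S\mu\circ\lambda T\circ T\nu$; (W5) $S\mu\circ\nu T\circ S\nu = S\mu\circ\nu T\circ S\lambda\circ\nu S$; (W6) $S\mu\circ\nu T\circ S\sigma = S\eta$; (W7) $S\mu\circ\nu T\circ S\lambda\circ\sigma S = S\eta$. (Equivalently, a wreath is a monad on $(\mathscr{A},T)$ in the 2-category $\mathrm{EM}(\mathfrak{K})$ of monads, morphisms $(F,\phi)$ with $\phi\colon SF\Rightarrow FT$, and 2-cells $\rho\colon F\Rightarrow GS$.) A mixed opwreath around the monad $T$ consists of an endomorphism $G$ of $\mathscr{A}$ and 2-cells $\zeta\colon GT\Rightarrow TG$, $\delta\colon G\Rightarrow TGG$, $\varepsilon\colon G\Rightarrow T$ satisfying the seven axioms: (M1) $\zeta\circ G\mu = \mu G\circ T\zeta\circ\zeta T$;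 (M2) $\zeta\circ G\eta = \eta G$; (M3) $\mu\circ\varepsilon T = \mu\circ T\varepsilon\circ\zeta$; (M4) $\mu GG\circ T\zeta G\circ TG\zeta\circ\delta T = \mu GG\circ T\delta\circ\zeta$; (M5) $\mu GGG\circ T\delta G\circ\delta = \mu GGG\circ T\zeta GG\circ TG\delta\circ\delta$; (M6) $\mu G\circ T\varepsilon G\circ\delta = \eta G$; (M7) $\mu G\circ T\zeta\circ TG\varepsilon\circ\delta = \eta G$. (Equivalently, a comonad on $(\mathscr{A},T)$ in the Kleisli-completion 2-category $\mathrm{KL}(\mathfrak{K})$.) *)

From mathcomp Require Import ssreflect ssrfun ssrbool.

Set Implicit Arguments.
Unset Strict Implicit.

Definition trc {X : Type} (C : X -> X -> Type) {f f' g g' : X}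
  (e1 : f = f') (e2 : g = g') (c : C f g) : C f' g' :=
  match e1 in _ = f1 return C f1 g' with
  | eq_refl => match e2 in _ = g1 return C f g1 with eq_refl => c end
  end.
Arguments trc {X} C {f f' g g'} e1 e2 c.

(* A (strict) 2-category.  comp1 f g = f o g (i.e. f after g, written fg);
   vcomp b a = b o a (vertical); hcomp b a = Godement product b * a. *)
Record TwoCategory := {
  Obj : Type;
  Hom : Obj -> Obj -> Type;
  Cell : forall a b : Obj, Hom a b -> Hom a b -> Type;
  id1 : forall a, Hom a a;
  comp1 : forall a b c, Hom b c -> Hom a b -> Hom a c;
  id2 : forall a b (f : Hom a b), Cell f f;
  vcomp : forall a b (f g h : Hom a b), Cell g h -> Cell f g -> Cell f h;
  hcomp : forall a b c (f f' : Hom b c) (g g' : Hom a b),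
      Cell f f' -> Cell g g' -> Cell (comp1 f g) (comp1 f' g');
  comp1A : forall a b c d (f : Hom c d) (g : Hom b c) (h : Hom a b),
      comp1 f (comp1 g h) = comp1 (comp1 f g) h;
  comp1l : forall a b (f : Hom a b), comp1 (id1 b) f = f;
  comp1r : forall a b (f : Hom a b), comp1 f (id1 a) = f;
  vcompA : forall a b (f g h k : Hom a b) (x : Cell h k) (y : Cell g h) (z : Cell f g),
      vcomp x (vcomp y z) = vcomp (vcomp x y) z;
  vcomp1l : forall a b (f g : Hom a b) (x : Cell f g), vcomp (id2 g) x = x;
  vcomp1r : forall a b (f g : Hom a b) (x : Cell f g), vcomp x (id2 f) = x;
  hcomp_id : forall a b c (f : Hom b c) (g : Hom a b),
      hcomp (id2 f) (id2 g) = id2 (comp1 f g);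
  interchange : forall a b c (f f' f'' : Hom b c) (g g' g'' : Hom a b)
      (x' : Cell f' f'') (x : Cell f f') (y' : Cell g' g'') (y : Cell g g'),
      hcomp (vcomp x' x) (vcomp y' y) = vcomp (hcomp x' y') (hcomp x y);
  hcompA : forall a b c d (f f' : Hom c d) (g g' : Hom b c) (h h' : Hom a b)
      (x : Cell f f') (y : Cell g g') (z : Cell h h'),
      trc (@Cell a d) (comp1A f g h) (comp1A f' g' h') (hcomp x (hcomp y z))
      = hcomp (hcomp x y) z;
  hcomp1l : forall a b (f f' : Hom a b) (x : Cell f f'),
      trc (@Cell a b) (comp1l f) (comp1l f') (hcomp (id2 (id1 b)) x) = x;
  hcomp1r : forall a b (f f' : Hom a b) (x : Cell f f'),
      trc (@Cell a b) (comp1r f) (comp1r f') (hcomp x (id2 (id1 a))) = x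
}.

Arguments Cell {t a b} _ _.
Arguments id1 {t} a.
Arguments comp1 {t a b c} _ _.
Arguments id2 {t a b} f.
Arguments vcomp {t a b f g h} _ _.
Arguments hcomp {t a b c f f' g g'} _ _.
Arguments comp1A {t a b c d} f g h.
Arguments comp1l {t a b} f.
Arguments comp1r {t a b} f.

Section Endo.
Variables (K : TwoCategory) (A : Obj K).

Local Notation E := (Hom A A).
Local Notation "f ** g" := (comp1 f g) (at level 35, right associativity).
Local Notation I := (id1 A).
Local Notation "b ∘∘ a" := (vcomp b a) (at level 50, left associativity).

Definition cst (f g : E) (e : f = g) : Cell f g :=
  trc (@Cell K A A) eq_refl e (id2 f).

Definition lw (X : E) {f g : E} (a : Cell f g) : Cell (X ** f) (X ** g) :=
  hcomp (id2 X) a.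
Definition rw {f g : E} (a : Cell f g) (X : E) : Cell (f ** X) (g ** X) :=
  hcomp a (id2 X).

(* the (identity) associativity and unit constraint cells of the strict
   2-category, needed only to make the typing of composites explicit *)
Definition asc (X Y Z : E) : Cell (X ** (Y ** Z)) ((X ** Y) ** Z) :=
  cst (comp1A X Y Z).
Definition asc' (X Y Z : E) : Cell ((X ** Y) ** Z) (X ** (Y ** Z)) :=
  cst (esym (comp1A X Y Z)).
Definition lu (X : E) : Cell (I ** X) X := cst (comp1l X).
Definition lu' (X : E) : Cell X (I ** X) := cst (esym (comp1l X)).
Definition ru (X : E) : Cell (X ** I) X := cst (comp1r X).
Definition ru' (X : E) : Cell X (X ** I) := cst (esym (comp1r X)).

Definition is_monad (T : E) (mu : Cell (T ** T) T) (eta : Cell I T) : Prop :=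
  (mu ∘∘ lw T mu = mu ∘∘ rw mu T ∘∘ asc T T T /\
      mu ∘∘ lw T eta = ru T /\
      mu ∘∘ rw eta T = lu T).

Definition is_adjunction (G S : E) (u : Cell I (S ** G)) (e : Cell (G ** S) I)
  : Prop :=
  lu G ∘∘ rw e G ∘∘ asc G S G ∘∘ lw G u ∘∘ ru' G = id2 G /\
  ru S ∘∘ lw S e ∘∘ asc' S G S ∘∘ rw u S ∘∘ lu' S = id2 S.

Variables (T : E) (mu : Cell (T ** T) T) (eta : Cell I T).

Definition is_wreath (S : E) (nu : Cell (S ** S) (S ** T))
  (sigma : Cell I (S ** T)) (lambda : Cell (T ** S) (S ** T)) : Prop :=
  (
      lambda ∘∘ rw mu S
      = lw S mu ∘∘ asc' S T T ∘∘ rw lambda T ∘∘ asc T S T ∘∘ lw T lambda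
          ∘∘ asc' T T S /\
      lambda ∘∘ rw eta S ∘∘ lu' S = lw S eta ∘∘ ru' S /\
      lw S mu ∘∘ asc' S T T ∘∘ rw lambda T ∘∘ asc T S T ∘∘ lw T sigma ∘∘ ru' T
      = lw S mu ∘∘ asc' S T T ∘∘ rw sigma T ∘∘ lu' T /\
      lw S mu ∘∘ asc' S T T ∘∘ rw nu T ∘∘ asc S S T ∘∘ lw S lambda
          ∘∘ asc' S T S ∘∘ rw lambda S
      = lw S mu ∘∘ asc' S T T ∘∘ rw lambda T ∘∘ asc T S T ∘∘ lw T nu
          ∘∘ asc' T S S /\
      lw S mu ∘∘ asc' S T T ∘∘ rw nu T ∘∘ asc S S T ∘∘ lw S nu
      = lw S mu ∘∘ asc' S T T ∘∘ rw nu T ∘∘ asc S S T ∘∘ lw S lambda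
          ∘∘ asc' S T S ∘∘ rw nu S ∘∘ asc S S S /\
      lw S mu ∘∘ asc' S T T ∘∘ rw nu T ∘∘ asc S S T ∘∘ lw S sigma = lw S eta /\
      lw S mu ∘∘ asc' S T T ∘∘ rw nu T ∘∘ asc S S T ∘∘ lw S lambda
          ∘∘ asc' S T S ∘∘ rw sigma S ∘∘ lu' S
      = lw S eta ∘∘ ru' S).

(* Mixed opwreath (zeta, delta, epsilon) on G around T : axioms (M1)-(M7).
   Words of length >= 3 are bracketed to the right: TGG = T(GG). *)
Definition is_mixed_opwreath (G : E) (zeta : Cell (G ** T) (T ** G))
  (delta : Cell G (T ** G ** G)) (epsilon : Cell G T) : Prop :=
  (
      zeta ∘∘ lw G mu
      = rw mu G ∘∘ asc T T G ∘∘ lw T zeta ∘∘ asc' T G T ∘∘ rw zeta T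
          ∘∘ asc G T T /\
      zeta ∘∘ lw G eta ∘∘ ru' G = rw eta G ∘∘ lu' G /\
      mu ∘∘ rw epsilon T = mu ∘∘ lw T epsilon ∘∘ zeta /\
      rw mu (G ** G) ∘∘ asc T T (G ** G) ∘∘ lw T (asc' T G G)
          ∘∘ lw T (rw zeta G) ∘∘ lw T (asc G T G) ∘∘ lw T (lw G zeta)
          ∘∘ lw T (asc' G G T) ∘∘ asc' T (G ** G) T ∘∘ rw delta T
      = rw mu (G ** G) ∘∘ asc T T (G ** G) ∘∘ lw T delta ∘∘ zeta /\
      rw mu (G ** G ** G) ∘∘ asc T T (G ** G ** G) ∘∘ lw T (lw T (asc' G G G))
          ∘∘ lw T (asc' T (G ** G) G) ∘∘ lw T (rw delta G) ∘∘ delta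
      = rw mu (G ** G ** G) ∘∘ asc T T (G ** G ** G)
          ∘∘ lw T (asc' T G (G ** G)) ∘∘ lw T (rw zeta (G ** G))
          ∘∘ lw T (asc G T (G ** G)) ∘∘ lw T (lw G delta) ∘∘ delta /\
      rw mu G ∘∘ asc T T G ∘∘ lw T (rw epsilon G) ∘∘ delta
      = rw eta G ∘∘ lu' G /\
      rw mu G ∘∘ asc T T G ∘∘ lw T zeta ∘∘ lw T (lw G epsilon) ∘∘ delta
      = rw eta G ∘∘ lu' G).

Variables (G S : E) (u : Cell I (S ** G)) (e : Cell (G ** S) I).

Definition mate_zeta (lambda : Cell (T ** S) (S ** T)) : Cell (G ** T) (T ** G) :=
  lu (T ** G) ∘∘ rw e (T ** G) ∘∘ asc G S (T ** G) ∘∘ lw G (asc' S T G)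
    ∘∘ lw G (rw lambda G) ∘∘ lw G (asc T S G) ∘∘ lw G (lw T u) ∘∘ lw G (ru' T).

Definition mate_delta (nu : Cell (S ** S) (S ** T)) : Cell G (T ** G ** G) :=
  lu (T ** G ** G) ∘∘ rw e (T ** G ** G) ∘∘ asc G S (T ** G ** G)
    ∘∘ lw G (asc' S T (G ** G)) ∘∘ lw G (rw nu (G ** G))
    ∘∘ lw G (asc S S (G ** G)) ∘∘ lw G (lw S (asc' S G G))
    ∘∘ lw G (lw S (rw u G)) ∘∘ lw G (lw S (lu' G)) ∘∘ lw G u ∘∘ ru' G.

Definition mate_epsilon (sigma : Cell I (S ** T)) : Cell G T :=
  lu T ∘∘ rw e T ∘∘ asc G S T ∘∘ lw G sigma ∘∘ ru' G.

Definition wreath_data : Type :=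
  (Cell (S ** S) (S ** T) * Cell I (S ** T) * Cell (T ** S) (S ** T))%type.
Definition opwreath_data : Type :=
  (Cell (G ** T) (T ** G) * Cell G (T ** G ** G) * Cell G T)%type.

Definition mate (w : wreath_data) : opwreath_data :=
  let: (nu, sigma, lambda) := w in
  (mate_zeta lambda, mate_delta nu, mate_epsilon sigma).

End Endo.

(* Composition of 1-cells is associative and unital only up to the equalities comp1A,
   comp1l and comp1r, which is why the axioms carry explicit constraint cells.  Trade a
   2-cell a : X => Y of K(A, A) for its family of components aW : XW => YW, natural in W
   for left whiskering; a cell is recovered from its component at W = 1.  Reading each
   composite XW through a function of W equal to it, the constraint cells become
   identities, and every axiom (Wi), (Mi) becomes an equation between natural families.
   The adjunction gives natural families uW : W => SGW and eW : GSW => W, and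
   transposition y |-> Sy o uW is a bijection.  The transpose of either side of (Mi) is
   the corresponding side of (Wi) precomposed with components of u, and this
   precomposition is injective on natural families (undo it with e and a triangle
   identity); hence (Wi) holds iff (Mi) does.  Bijectivity of mateship is proved the same
   way, with explicit inverse mates. *)

From Pilot Require Import Defs.
From mathcomp Require Import ssreflect ssrfun ssrbool.
From Stdlib Require Import ProofIrrelevance.

Set Implicit Arguments.
Unset Strict Implicit.

Local Notation "f ** g" := (comp1 f g) (at level 35, right associativity).
Local Notation "b ∘∘ a" := (vcomp b a) (at level 50, left associativity).

Section EndoCells.
Variables (K : TwoCategory) (A : Obj K).
Local Notation E := (Hom A A).
Local Notation C := (@Cell K A A).

Lemma tail_congr2 (f g g' h k : E) (x : C g h) (y : C f g) (x' : C g' h) (y' : C f g')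
  (p : C h k) : x ∘∘ y = x' ∘∘ y' -> p ∘∘ x ∘∘ y = p ∘∘ x' ∘∘ y'.
Proof. by move=> xy; rewrite -!vcompA xy. Qed.

Lemma tail_congr21 (f g h k : E) (x : C g h) (y : C f g) (z : C f h) (p : C h k) :
  x ∘∘ y = z -> p ∘∘ x ∘∘ y = p ∘∘ z.
Proof. by move=> xy; rewrite -vcompA xy. Qed.

Lemma lw_vcomp (X f g h : E) (b : C g h) (a : C f g) :
  lw X (b ∘∘ a) = lw X b ∘∘ lw X a.
Proof. by rewrite /lw -Defs.interchange vcomp1l. Qed.

Lemma lw_lw_vcomp (X Y f g h : E) (b : C g h) (a : C f g) :
  lw X (lw Y (b ∘∘ a)) = lw X (lw Y b) ∘∘ lw X (lw Y a).
Proof. by rewrite !lw_vcomp. Qed.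

Lemma rw_vcomp (X f g h : E) (b : C g h) (a : C f g) :
  rw (b ∘∘ a) X = rw b X ∘∘ rw a X.
Proof. by rewrite /rw -Defs.interchange vcomp1l. Qed.

Lemma lw_id2 (X f : E) : lw X (id2 f) = id2 (X ** f).
Proof. exact: hcomp_id. Qed.

Lemma rw_id2 (X f : E) : rw (id2 f) X = id2 (f ** X).
Proof. exact: hcomp_id. Qed.

Lemma whisker_exchange (f f' g g' : E) (x : C f f') (y : C g g') :
  rw x g' ∘∘ lw f y = lw f' y ∘∘ rw x g.
Proof. by rewrite /rw /lw -!Defs.interchange !vcomp1l !vcomp1r. Qed.

Lemma trc_cst (f f' g g' : E) (e1 : f = f') (e2 : g = g') (c : C f g) :
  trc C e1 e2 c = cst e2 ∘∘ c ∘∘ cst (esym e1).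
Proof. by case: _ / e1; case: _ / e2; rewrite /= vcomp1l vcomp1r. Qed.

Lemma cst_irr (f g : E) (e e' : f = g) : cst e = cst e'.
Proof. by rewrite (proof_irrelevance _ e e'). Qed.

Lemma cst_id (f : E) (e : f = f) : cst e = id2 f.
Proof. by rewrite (proof_irrelevance _ e erefl). Qed.

Lemma cst_vcomp (f g h : E) (e1 : f = g) (e2 : g = h) :
  cst e2 ∘∘ cst e1 = cst (etrans e1 e2).
Proof. by case: _ / e2; case: _ / e1; rewrite /= vcomp1l. Qed.

Lemma cst_vcompr (f g h k : E) (e1 : f = g) (e2 : g = h) (p : C h k) :
  p ∘∘ cst e2 ∘∘ cst e1 = p ∘∘ cst (etrans e1 e2).
Proof. by rewrite -vcompA cst_vcomp. Qed.

Lemma cst_vcompK (f g h k : E) (p : f = g) (q : g = f) (y : C g k) (x : C h g) :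
  y ∘∘ cst p ∘∘ cst q ∘∘ x = y ∘∘ x.
Proof. by rewrite -(vcompA y) cst_vcomp cst_id vcomp1r. Qed.

Lemma lw_cst (X f g : E) (e : f = g) : lw X (cst e) = cst (f_equal (comp1 X) e).
Proof. by case: _ / e; rewrite /lw /= hcomp_id. Qed.

Lemma rw_cst (X f g : E) (e : f = g) : rw (cst e) X = cst (f_equal (comp1^~ X) e).
Proof. by case: _ / e; rewrite /rw /= hcomp_id. Qed.

Lemma cst_conjugate_inj (f f' g g' : E) (p : g = g') (q : f' = f) (x y : C f g) :
  cst p ∘∘ x ∘∘ cst q = cst p ∘∘ y ∘∘ cst q -> x = y.
Proof. by destruct p, q; rewrite /= !vcomp1l !vcomp1r. Qed.

Lemma hcompA_cst (f f' g g' h h' : E) (x : C f f') (y : C g g') (z : C h h') :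
  hcomp x (hcomp y z)
  = cst (esym (comp1A f' g' h')) ∘∘ hcomp (hcomp x y) z ∘∘ cst (comp1A f g h).
Proof.
rewrite -hcompA trc_cst !vcompA cst_vcomp cst_id vcomp1l.
by rewrite -vcompA cst_vcomp cst_id vcomp1r.
Qed.

Lemma hcompA_cst' (f f' g g' h h' : E) (x : C f f') (y : C g g') (z : C h h') :
  hcomp (hcomp x y) z
  = cst (comp1A f' g' h') ∘∘ hcomp x (hcomp y z) ∘∘ cst (esym (comp1A f g h)).
Proof.
by rewrite hcompA_cst !vcompA cst_vcomp cst_id vcomp1l -vcompA cst_vcomp cst_id vcomp1r.
Qed.

Lemma rw_id1 (f g : E) (x : C f g) :
  x = cst (comp1r g) ∘∘ rw x (id1 A) ∘∘ cst (esym (comp1r f)).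
Proof. by rewrite -trc_cst hcomp1r. Qed.

Lemma lw_id1 (f g : E) (x : C f g) :
  x = cst (comp1l g) ∘∘ lw (id1 A) x ∘∘ cst (esym (comp1l f)).
Proof. by rewrite -trc_cst hcomp1l. Qed.

Lemma rw_transport (Y Y' V V' : E) (a : C Y Y') (e : V = V') :
  rw a V' = cst (f_equal (comp1 Y') e) ∘∘ rw a V ∘∘ cst (esym (f_equal (comp1 Y) e)).
Proof. by case: _ / e; rewrite /= vcomp1l vcomp1r. Qed.

End EndoCells.

Section Components.
Variables (K : TwoCategory) (A : Obj K).
Local Notation E := (Hom A A).
Local Notation C := (@Cell K A A).

Definition presents (X : E) (f : E -> E) : Prop := forall W, X ** W = f W.

Lemma presents_self (X : E) : presents X (comp1 X).
Proof. by []. Qed.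

Lemma presents_id1 : presents (id1 A) (fun W => W).
Proof. exact: comp1l. Qed.

Lemma presents_comp1 (X Y : E) f g :
  presents X f -> presents Y g -> presents (X ** Y) (fun W => f (g W)).
Proof. by move=> hX hY W; rewrite -comp1A hY hX. Qed.

Definition component (X Y : E) f g (hX : presents X f) (hY : presents Y g)
  (a : C X Y) (W : E) : C (f W) (g W) :=
  cst (hY W) ∘∘ rw a W ∘∘ cst (esym (hX W)).

Definition whisk (X : E) f (hX : presents X f) (W W' : E) (c : C W W') :
  C (f W) (f W') :=
  cst (hX W') ∘∘ lw X c ∘∘ cst (esym (hX W)).

Lemma component_natural X Y f g (hX : presents X f) (hY : presents Y g) (a : C X Y)
  W W' (c : C W W') :
  component hX hY a W' ∘∘ whisk hX c = whisk hY c ∘∘ component hX hY a W.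
Proof. by rewrite /component /whisk !vcompA !cst_vcompK (tail_congr2 _ (whisker_exchange _ _)). Qed.

Lemma whisk_self X (hX : presents X (comp1 X)) W W' (c : C W W') : whisk hX c = lw X c.
Proof. by rewrite /whisk !cst_id vcomp1l vcomp1r. Qed.

Lemma whisk_id1 (hI : presents (id1 A) (fun W => W)) W W' (c : C W W') : whisk hI c = c.
Proof. by rewrite /whisk [RHS]lw_id1; congr (_ ∘∘ _ ∘∘ _); apply: cst_irr. Qed.

Lemma whisk_comp1 X Y f g (hX : presents X f) (hY : presents Y g)
  (hXY : presents (X ** Y) (fun W => f (g W))) W W' (c : C W W') :
  whisk hXY c = whisk hX (whisk hY c).
Proof.
rewrite /whisk !lw_vcomp !lw_cst /lw hcompA_cst hcomp_id !vcompA !cst_vcompr !cst_vcomp.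
by congr (_ ∘∘ _ ∘∘ _); apply: cst_irr.
Qed.

Definition represents (X Y : E) f g (a : C X Y) (phi : forall W, C (f W) (g W)) :=
  exists (hX : presents X f) (hY : presents Y g), forall W, phi W = component hX hY a W.

Lemma represents_component X Y f g (hX : presents X f) (hY : presents Y g) (a : C X Y) :
  represents a (component hX hY a).
Proof. by exists hX, hY. Qed.

Lemma represents_ext X Y f g (a : C X Y) (phi psi : forall W, C (f W) (g W)) :
  represents a phi -> (forall W, phi W = psi W) -> represents a psi.
Proof. by move=> [hX [hY Ha]] phi_psi; exists hX, hY => W; rewrite -phi_psi. Qed.

Lemma represents_uniq X Y f g (a : C X Y) (phi psi : forall W, C (f W) (g W)) :
  represents a phi -> represents a psi -> forall W, phi W = psi W.
Proof.
move=> [hX [hY Ha]] [hX' [hY' Ha']] W; rewrite Ha Ha'.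
by rewrite (proof_irrelevance _ hX hX') (proof_irrelevance _ hY hY').
Qed.

Lemma represents_inj X Y f g (a b : C X Y) (phi : forall W, C (f W) (g W)) :
  represents a phi -> represents b phi -> a = b.
Proof.
move=> [hX [hY Ha]] [hX' [hY' Hb]].
have := Ha (id1 A); rewrite Hb /component.
rewrite (proof_irrelevance _ hX hX') (proof_irrelevance _ hY hY') => /cst_conjugate_inj ab.
by rewrite (rw_id1 a) (rw_id1 b) ab.
Qed.

Lemma represents_eq X Y f g (a b : C X Y) (phi psi : forall W, C (f W) (g W)) :
  represents a phi -> represents b psi -> (a = b <-> forall W, phi W = psi W).
Proof.
move=> Ra Rb; split=> [ab|phi_psi]; first by apply: represents_uniq Ra _; rewrite ab.
by apply: (represents_inj Ra); apply: (represents_ext Rb) => W; rewrite phi_psi.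
Qed.

Lemma represents_natural X Y f g (a : C X Y) (phi : forall W, C (f W) (g W)) :
  represents a phi -> forall (hX : presents X f) (hY : presents Y g) W W' (c : C W W'),
  phi W' ∘∘ whisk hX c = whisk hY c ∘∘ phi W.
Proof.
move=> [hX0 [hY0 Ha]] hX hY W W' c; rewrite !Ha.
rewrite (proof_irrelevance _ hX0 hX) (proof_irrelevance _ hY0 hY).
exact: component_natural.
Qed.

Lemma represents_vcomp X Y Z f g k (a : C X Y) (b : C Y Z)
  (phi : forall W, C (f W) (g W)) (psi : forall W, C (g W) (k W)) :
  represents a phi -> represents b psi -> represents (b ∘∘ a) (fun W => psi W ∘∘ phi W).
Proof.
move=> [hX [hY Ha]] [hY' [hZ Hb]]; exists hX, hZ => W.
by rewrite Ha Hb /component rw_vcomp !vcompA cst_vcompK.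
Qed.

Lemma represents_lw (X Y Y' : E) f g (a : C Y Y') (phi : forall W, C (f W) (g W)) :
  represents a phi -> represents (lw X a) (fun W => lw X (phi W)).
Proof.
move=> [hY [hY' Ha]].
exists (presents_comp1 (presents_self X) hY), (presents_comp1 (presents_self X) hY') => W.
rewrite Ha /component !lw_vcomp !lw_cst /lw /rw hcompA_cst !vcompA !cst_vcompr !cst_vcomp.
by congr (_ ∘∘ _ ∘∘ _); apply: cst_irr.
Qed.

Lemma represents_rw (Y Y' Z : E) f g h (hZ : presents Z h) (a : C Y Y')
  (phi : forall W, C (f W) (g W)) :
  represents a phi -> represents (rw a Z) (fun W => phi (h W)).
Proof.
move=> [hY [hY' Ha]]; exists (presents_comp1 hY hZ), (presents_comp1 hY' hZ) => W.
rewrite Ha /component (rw_transport a (hZ W)) /rw hcompA_cst' hcomp_id.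
rewrite !vcompA !cst_vcompr !cst_vcomp.
by congr (_ ∘∘ _ ∘∘ _); apply: cst_irr.
Qed.

Lemma represents_cst X Y f (hX : presents X f) (hY : presents Y f) (e : X = Y) :
  represents (cst e) (fun W => id2 (f W)).
Proof. by exists hX, hY => W; rewrite /component rw_cst !cst_vcomp cst_id. Qed.

Lemma represents_id2 X f (hX : presents X f) : represents (id2 X) (fun W => id2 (f W)).
Proof. exact: (represents_cst hX hX erefl). Qed.

End Components.

Ltac presentation X :=
  lazymatch X with
  | comp1 ?Y ?Z =>
      let hY := presentation Y in let hZ := presentation Z in constr:(presents_comp1 hY hZ)
  | @id1 ?K ?A => constr:(@presents_id1 K A)
  | _ => constr:(presents_self X)
  end.

Ltac represents_cst_of a e :=
  lazymatch type of a with @Cell _ _ _ ?X ?Y =>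
    let hX := presentation X in let hY := presentation Y in constr:(represents_cst hX hY e)
  end.

Ltac represents_of a :=
  lazymatch a with
  | vcomp ?b ?c =>
      let Rc := represents_of c in let Rb := represents_of b in constr:(represents_vcomp Rc Rb)
  | lw ?X ?c => let Rc := represents_of c in constr:(represents_lw X Rc)
  | rw ?c ?Z =>
      let Rc := represents_of c in let hZ := presentation Z in constr:(represents_rw hZ Rc)
  | asc ?X ?Y ?Z => represents_cst_of a (comp1A X Y Z)
  | asc' ?X ?Y ?Z => represents_cst_of a (esym (comp1A X Y Z))
  | lu ?X => represents_cst_of a (comp1l X)
  | lu' ?X => represents_cst_of a (esym (comp1l X))
  | ru ?X => represents_cst_of a (comp1r X)
  | ru' ?X => represents_cst_of a (esym (comp1r X))
  | id2 ?X => let hX := presentation X in constr:(represents_id2 hX)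
  | _ =>
      lazymatch type of a with @Cell _ _ _ ?X ?Y =>
        let hX := presentation X in let hY := presentation Y in
        constr:(represents_component hX hY a)
      end
  end.

(* Turns [represents a phi] into the pointwise identity between [phi] and the family read
   off the shape of [a], with identity cells cancelled. *)
Ltac represent :=
  lazymatch goal with |- represents ?a _ =>
    let a' := eval cbv beta delta [mate_zeta mate_delta mate_epsilon] in a in
    let Ra := represents_of a' in
    apply: (represents_ext Ra) => ?; cbv beta;
    rewrite ?lw_id2 ?rw_id2 ?vcomp1l ?vcomp1r
  end.

Ltac expand_whisk hX :=
  lazymatch hX with
  | presents_comp1 ?hY ?hZ =>
      try rewrite (whisk_comp1 hY hZ); expand_whisk hY; expand_whisk hZ
  | _ => idtac
  end.

Ltac naturality Ra c :=
  lazymatch type of Ra with @represents _ _ ?X ?Y _ _ _ _ =>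
    let hX := presentation X in let hY := presentation Y in
    have := represents_natural Ra hX hY c;
    expand_whisk hX; expand_whisk hY; rewrite ?whisk_self ?whisk_id1;
    let N := fresh "N" in move=> N; exact: N
  end.

Section FamilyMates.
Variables (K : TwoCategory) (A : Obj K).
Local Notation E := (Hom A A).
Local Notation C := (@Cell K A A).
Local Notation lw0 := (fun W W' (c : C W W') => c).
Local Notation lw1 X := (fun W W' (c : C W W') => lw X c).
Local Notation lw2 X Y := (fun W W' (c : C W W') => lw X (lw Y c)).
Variables (T S G : E).
Variables (u_ : forall W, C W (S ** (G ** W))) (e_ : forall W, C (G ** (S ** W)) W).
Hypothesis u_natural : forall W W' (c : C W W'), u_ W' ∘∘ c = lw S (lw G c) ∘∘ u_ W.
Hypothesis e_natural : forall W W' (c : C W W'), e_ W' ∘∘ lw G (lw S c) = c ∘∘ e_ W.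
Hypothesis triangle_G : forall W, e_ (G ** W) ∘∘ lw G (u_ W) = id2 _.
Hypothesis triangle_S : forall W, lw S (e_ W) ∘∘ u_ (S ** W) = id2 _.

Definition transpose P Q (y : C (G ** P) Q) : C P (S ** Q) := lw S y ∘∘ u_ P.
Definition untranspose P Q (x : C P (S ** Q)) : C (G ** P) Q := e_ Q ∘∘ lw G x.

Lemma transposeK P Q : cancel (@transpose P Q) (@untranspose P Q).
Proof.
by move=> y; rewrite /transpose /untranspose lw_vcomp vcompA e_natural -vcompA triangle_G vcomp1r.
Qed.

Lemma untransposeK P Q : cancel (@untranspose P Q) (@transpose P Q).
Proof.
by move=> x; rewrite /transpose /untranspose lw_vcomp -vcompA -u_natural vcompA triangle_S vcomp1l.
Qed.

Lemma transpose_eq (f g : E -> E) (x y : forall W, C (G ** f W) (g W))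
  (phi psi : forall W, C (f W) (S ** g W)) :
  (forall W, transpose (x W) = phi W) -> (forall W, transpose (y W) = psi W) ->
  (forall W, phi W = psi W) <-> (forall W, x W = y W).
Proof.
move=> Hx Hy; split=> xy W; last by rewrite -Hx -Hy xy.
by apply: (can_inj (@transposeK _ _)); rewrite Hx Hy xy.
Qed.

Section AlongUnit.
Variables (f g : E -> E) (af : forall W W', C W W' -> C (f W) (f W'))
  (ag : forall W W', C W W' -> C (g W) (g W')).
Hypothesis af_vcomp :
  forall W1 W2 W3 (b : C W2 W3) (a : C W1 W2), af (b ∘∘ a) = af b ∘∘ af a.
Hypothesis af_id2 : forall W, af (id2 W) = id2 _.

Definition natural (phi : forall W, C (f (S ** W)) (g W)) :=
  forall W W' (c : C W W'), phi W' ∘∘ af (lw S c) = ag c ∘∘ phi W.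

Definition along_unit (phi : forall W, C (f (S ** W)) (g W)) W : C (f W) (g (G ** W)) :=
  phi (G ** W) ∘∘ af (u_ W).

Lemma along_unitK phi : natural phi -> forall W, ag (e_ W) ∘∘ along_unit phi (S ** W) = phi W.
Proof.
move=> Nphi W.
by rewrite /along_unit vcompA -Nphi -vcompA -af_vcomp triangle_S af_id2 vcomp1r.
Qed.

Lemma along_unit_natural phi : natural phi -> forall W W' (c : C W W'),
  along_unit phi W' ∘∘ af c = ag (lw G c) ∘∘ along_unit phi W.
Proof.
move=> Nphi W W' c.
by rewrite /along_unit -vcompA -af_vcomp u_natural af_vcomp vcompA Nphi -vcompA.
Qed.

Lemma along_unit_eq phi psi : natural phi -> natural psi ->
  (forall W, along_unit phi W = along_unit psi W) <-> (forall W, phi W = psi W).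
Proof.
move=> Nphi Npsi; split=> phi_psi W; last by rewrite /along_unit phi_psi.
by rewrite -(along_unitK Nphi) -(along_unitK Npsi) phi_psi.
Qed.

End AlongUnit.

Variables (mu_ : forall W, C (T ** (T ** W)) (T ** W)) (eta_ : forall W, C W (T ** W))
  (nu_ : forall W, C (S ** (S ** W)) (S ** (T ** W)))
  (sigma_ : forall W, C W (S ** (T ** W)))
  (lambda_ : forall W, C (T ** (S ** W)) (S ** (T ** W))).
Hypothesis mu_natural :
  forall W W' (c : C W W'), mu_ W' ∘∘ lw T (lw T c) = lw T c ∘∘ mu_ W.
Hypothesis eta_natural : forall W W' (c : C W W'), eta_ W' ∘∘ c = lw T c ∘∘ eta_ W.
Hypothesis nu_natural :
  forall W W' (c : C W W'), nu_ W' ∘∘ lw S (lw S c) = lw S (lw T c) ∘∘ nu_ W.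
Hypothesis sigma_natural :
  forall W W' (c : C W W'), sigma_ W' ∘∘ c = lw S (lw T c) ∘∘ sigma_ W.
Hypothesis lambda_natural :
  forall W W' (c : C W W'), lambda_ W' ∘∘ lw T (lw S c) = lw S (lw T c) ∘∘ lambda_ W.

Variables (zeta_ : forall W, C (G ** (T ** W)) (T ** (G ** W)))
  (delta_ : forall W, C (G ** W) (T ** (G ** (G ** W))))
  (eps_ : forall W, C (G ** W) (T ** W)).
Hypothesis zeta_natural :
  forall W W' (c : C W W'), zeta_ W' ∘∘ lw G (lw T c) = lw T (lw G c) ∘∘ zeta_ W.
Hypothesis delta_natural :
  forall W W' (c : C W W'), delta_ W' ∘∘ lw G c = lw T (lw G (lw G c)) ∘∘ delta_ W.
Hypothesis zeta_transpose :
  forall W, lw S (zeta_ W) ∘∘ u_ (T ** W) = lambda_ (G ** W) ∘∘ lw T (u_ W).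
Hypothesis delta_transpose :
  forall W, lw S (delta_ W) ∘∘ u_ W = nu_ (G ** (G ** W)) ∘∘ lw S (u_ (G ** W)) ∘∘ u_ W.
Hypothesis eps_transpose : forall W, lw S (eps_ W) ∘∘ u_ W = sigma_ W.

Lemma transpose_M1l W :
  transpose (zeta_ W ∘∘ lw G (mu_ W))
  = along_unit (lw2 T T) (fun W => lambda_ W ∘∘ mu_ (S ** W)) W.
Proof.
rewrite /transpose /along_unit !lw_vcomp -vcompA -u_natural vcompA zeta_transpose.
by rewrite -!vcompA mu_natural.
Qed.

Lemma transpose_M1r W :
  transpose (mu_ (G ** W) ∘∘ lw T (zeta_ W) ∘∘ zeta_ (T ** W))
  = along_unit (lw2 T T) (fun W => lw S (mu_ W) ∘∘ lambda_ (T ** W) ∘∘ lw T (lambda_ W)) W.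
Proof.
rewrite /transpose /along_unit !lw_vcomp (tail_congr21 _ (zeta_transpose _)) !vcompA.
rewrite (tail_congr2 _ (esym (lambda_natural _))).
by rewrite (tail_congr21 _ (esym (lw_vcomp _ _ _))) zeta_transpose lw_vcomp !vcompA.
Qed.

Lemma transpose_M2l W :
  transpose (zeta_ W ∘∘ lw G (eta_ W))
  = along_unit lw0 (fun W => lambda_ W ∘∘ eta_ (S ** W)) W.
Proof.
rewrite /transpose /along_unit !lw_vcomp -vcompA -u_natural vcompA zeta_transpose.
by rewrite -!vcompA eta_natural.
Qed.

Lemma transpose_M3l W :
  transpose (mu_ W ∘∘ eps_ (T ** W)) = lw S (mu_ W) ∘∘ sigma_ (T ** W).
Proof. by rewrite /transpose lw_vcomp -vcompA eps_transpose. Qed.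

Lemma transpose_M3r W :
  transpose (mu_ W ∘∘ lw T (eps_ W) ∘∘ zeta_ W)
  = lw S (mu_ W) ∘∘ lambda_ (T ** W) ∘∘ lw T (sigma_ W).
Proof.
rewrite /transpose !lw_vcomp (tail_congr21 _ (zeta_transpose _)) !vcompA.
rewrite (tail_congr2 _ (esym (lambda_natural _))).
by rewrite (tail_congr21 _ (esym (lw_vcomp _ _ _))) eps_transpose.
Qed.

Lemma transpose_M4l W :
  transpose (mu_ (G ** (G ** W)) ∘∘ lw T (zeta_ (G ** W)) ∘∘ lw T (lw G (zeta_ W))
             ∘∘ delta_ (T ** W))
  = along_unit (lw1 T)
      (along_unit (lw2 T S)
         (fun W => lw S (mu_ W) ∘∘ nu_ (T ** W) ∘∘ lw S (lambda_ W)
                   ∘∘ lambda_ (S ** W))) W.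
Proof.
rewrite /transpose /along_unit !lw_vcomp (tail_congr21 _ (delta_transpose _)) !vcompA.
rewrite (tail_congr2 _ (esym (nu_natural (lw G (zeta_ W))))).
rewrite (tail_congr2 _ (esym (nu_natural (zeta_ (G ** W))))).
rewrite (tail_congr21 _ (esym (lw_vcomp S (lw S (lw G (zeta_ W))) (u_ _)))) -(u_natural (zeta_ W)).
rewrite (lw_vcomp S (u_ _) (zeta_ W)) !vcompA (tail_congr21 _ (zeta_transpose W)) !vcompA.
rewrite (tail_congr21 _ (esym (lw_vcomp S (lw S (zeta_ (G ** W))) (u_ _)))).
rewrite zeta_transpose !lw_vcomp !vcompA.
by rewrite (tail_congr2 _ (lambda_natural _)).
Qed.

Lemma transpose_M4r W :
  transpose (mu_ (G ** (G ** W)) ∘∘ lw T (delta_ W) ∘∘ zeta_ W)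
  = along_unit (lw1 T)
      (along_unit (lw2 T S) (fun W => lw S (mu_ W) ∘∘ lambda_ (T ** W) ∘∘ lw T (nu_ W))) W.
Proof.
rewrite /transpose /along_unit !lw_vcomp (tail_congr21 _ (zeta_transpose _)) !vcompA.
rewrite (tail_congr2 _ (esym (lambda_natural _))).
by rewrite (tail_congr21 _ (esym (lw_vcomp _ _ _))) delta_transpose !lw_vcomp !vcompA.
Qed.

Lemma transpose_M5l W :
  transpose (mu_ (G ** (G ** (G ** W))) ∘∘ lw T (delta_ (G ** W)) ∘∘ delta_ W)
  = along_unit lw0 (along_unit (lw1 S) (along_unit (lw2 S S)
      (fun W => lw S (mu_ W) ∘∘ nu_ (T ** W) ∘∘ lw S (nu_ W)))) W.
Proof.
rewrite /transpose /along_unit !lw_vcomp (tail_congr21 _ (delta_transpose _)) !vcompA.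
rewrite (tail_congr2 _ (esym (nu_natural (delta_ (G ** W))))).
rewrite (tail_congr21 _ (esym (lw_vcomp S (lw S (delta_ _)) (u_ _)))).
by rewrite delta_transpose !lw_vcomp !vcompA.
Qed.

Lemma transpose_M5r W :
  transpose (mu_ (G ** (G ** (G ** W))) ∘∘ lw T (zeta_ (G ** (G ** W)))
             ∘∘ lw T (lw G (delta_ W)) ∘∘ delta_ W)
  = along_unit lw0 (along_unit (lw1 S) (along_unit (lw2 S S)
      (fun W => lw S (mu_ W) ∘∘ nu_ (T ** W) ∘∘ lw S (lambda_ W) ∘∘ nu_ (S ** W)))) W.
Proof.
rewrite /transpose /along_unit !lw_vcomp (tail_congr21 _ (delta_transpose _)) !vcompA.
rewrite (tail_congr2 _ (esym (nu_natural (lw G (delta_ W))))).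
rewrite (tail_congr2 _ (esym (nu_natural (zeta_ (G ** (G ** W)))))).
rewrite (tail_congr21 _ (esym (lw_vcomp S (lw S (lw G (delta_ W))) (u_ _)))).
rewrite -(u_natural (delta_ W)) (lw_vcomp S (u_ _) (delta_ W)) !vcompA.
rewrite (tail_congr21 _ (esym (lw_vcomp S (lw S (zeta_ (G ** (G ** W)))) (u_ _)))).
rewrite zeta_transpose !lw_vcomp !vcompA (tail_congr21 _ (delta_transpose W)) !vcompA.
by rewrite (tail_congr2 _ (nu_natural (u_ _))).
Qed.

Lemma transpose_M6l W :
  transpose (mu_ (G ** W) ∘∘ lw T (eps_ (G ** W)) ∘∘ delta_ W)
  = along_unit lw0 (fun W => lw S (mu_ W) ∘∘ nu_ (T ** W) ∘∘ lw S (sigma_ W)) W.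
Proof.
rewrite /transpose /along_unit !lw_vcomp (tail_congr21 _ (delta_transpose _)) !vcompA.
rewrite (tail_congr2 _ (esym (nu_natural (eps_ (G ** W))))).
by rewrite (tail_congr21 _ (esym (lw_vcomp S (lw S (eps_ _)) (u_ _)))) eps_transpose.
Qed.

Lemma transpose_M7l W :
  transpose (mu_ (G ** W) ∘∘ lw T (zeta_ W) ∘∘ lw T (lw G (eps_ W)) ∘∘ delta_ W)
  = along_unit lw0
      (fun W => lw S (mu_ W) ∘∘ nu_ (T ** W) ∘∘ lw S (lambda_ W) ∘∘ sigma_ (S ** W)) W.
Proof.
rewrite /transpose /along_unit !lw_vcomp (tail_congr21 _ (delta_transpose _)) !vcompA.
rewrite (tail_congr2 _ (esym (nu_natural (lw G (eps_ W))))).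
rewrite (tail_congr2 _ (esym (nu_natural (zeta_ W)))).
rewrite (tail_congr21 _ (esym (lw_vcomp S (lw S (lw G (eps_ W))) (u_ _)))).
rewrite -(u_natural (eps_ W)) (lw_vcomp S (u_ _) (eps_ W)) !vcompA.
rewrite (tail_congr21 _ (esym (lw_vcomp S (lw S (zeta_ W)) (u_ _)))).
rewrite zeta_transpose !lw_vcomp !vcompA (tail_congr21 _ (eps_transpose W)).
by rewrite (tail_congr2 _ (sigma_natural (u_ W))).
Qed.

Lemma transpose_eta W : transpose (eta_ (G ** W)) = along_unit lw0 (fun W => lw S (eta_ W)) W.
Proof. by []. Qed.

Ltac whiskering_functorial := by move=> *; rewrite ?lw_vcomp ?lw_id2.

Lemma W1_iff_M1
  (NL : natural (lw2 T T) (lw2 S T) (fun W => lambda_ W ∘∘ mu_ (S ** W)))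
  (NR : natural (lw2 T T) (lw2 S T)
          (fun W => lw S (mu_ W) ∘∘ lambda_ (T ** W) ∘∘ lw T (lambda_ W))) :
  (forall W, lambda_ W ∘∘ mu_ (S ** W)
             = lw S (mu_ W) ∘∘ lambda_ (T ** W) ∘∘ lw T (lambda_ W))
  <-> (forall W, zeta_ W ∘∘ lw G (mu_ W)
                 = mu_ (G ** W) ∘∘ lw T (zeta_ W) ∘∘ zeta_ (T ** W)).
Proof.
apply: iff_trans (iff_sym (along_unit_eq _ _ NL NR)) (transpose_eq transpose_M1l transpose_M1r);
  whiskering_functorial.
Qed.

Lemma W2_iff_M2
  (NL : natural lw0 (lw2 S T) (fun W => lambda_ W ∘∘ eta_ (S ** W)))
  (NR : natural lw0 (lw2 S T) (fun W => lw S (eta_ W))) :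
  (forall W, lambda_ W ∘∘ eta_ (S ** W) = lw S (eta_ W))
  <-> (forall W, zeta_ W ∘∘ lw G (eta_ W) = eta_ (G ** W)).
Proof.
apply: iff_trans (iff_sym (along_unit_eq _ _ NL NR)) (transpose_eq transpose_M2l transpose_eta);
  whiskering_functorial.
Qed.

Lemma W3_iff_M3 :
  (forall W, lw S (mu_ W) ∘∘ lambda_ (T ** W) ∘∘ lw T (sigma_ W)
             = lw S (mu_ W) ∘∘ sigma_ (T ** W))
  <-> (forall W, mu_ W ∘∘ eps_ (T ** W) = mu_ W ∘∘ lw T (eps_ W) ∘∘ zeta_ W).
Proof.
apply: iff_trans (transpose_eq transpose_M3r transpose_M3l) _.
by split=> H W; rewrite H.
Qed.

Lemma W4_iff_M4
  (NL : natural (lw2 T S) (lw2 S T)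
          (fun W => lw S (mu_ W) ∘∘ nu_ (T ** W) ∘∘ lw S (lambda_ W)
                    ∘∘ lambda_ (S ** W)))
  (NR : natural (lw2 T S) (lw2 S T)
          (fun W => lw S (mu_ W) ∘∘ lambda_ (T ** W) ∘∘ lw T (nu_ W))) :
  (forall W, lw S (mu_ W) ∘∘ nu_ (T ** W) ∘∘ lw S (lambda_ W) ∘∘ lambda_ (S ** W)
             = lw S (mu_ W) ∘∘ lambda_ (T ** W) ∘∘ lw T (nu_ W))
  <-> (forall W, mu_ (G ** (G ** W)) ∘∘ lw T (zeta_ (G ** W)) ∘∘ lw T (lw G (zeta_ W))
                   ∘∘ delta_ (T ** W)
                 = mu_ (G ** (G ** W)) ∘∘ lw T (delta_ W) ∘∘ zeta_ W).
Proof.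
have NL' := along_unit_natural (lw_lw_vcomp T S) NL.
have NR' := along_unit_natural (lw_lw_vcomp T S) NR.
apply: iff_trans (iff_sym (along_unit_eq _ _ NL NR)) _; try whiskering_functorial.
apply: iff_trans (iff_sym (along_unit_eq _ _ NL' NR')) _; try whiskering_functorial.
exact: transpose_eq transpose_M4l transpose_M4r.
Qed.

Lemma W5_iff_M5
  (NL : natural (lw2 S S) (lw2 S T)
          (fun W => lw S (mu_ W) ∘∘ nu_ (T ** W) ∘∘ lw S (nu_ W)))
  (NR : natural (lw2 S S) (lw2 S T)
          (fun W => lw S (mu_ W) ∘∘ nu_ (T ** W) ∘∘ lw S (lambda_ W) ∘∘ nu_ (S ** W))) :
  (forall W, lw S (mu_ W) ∘∘ nu_ (T ** W) ∘∘ lw S (nu_ W)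
             = lw S (mu_ W) ∘∘ nu_ (T ** W) ∘∘ lw S (lambda_ W) ∘∘ nu_ (S ** W))
  <-> (forall W, mu_ (G ** (G ** (G ** W))) ∘∘ lw T (delta_ (G ** W)) ∘∘ delta_ W
                 = mu_ (G ** (G ** (G ** W))) ∘∘ lw T (zeta_ (G ** (G ** W)))
                     ∘∘ lw T (lw G (delta_ W)) ∘∘ delta_ W).
Proof.
have NL' := along_unit_natural (lw_lw_vcomp S S) NL.
have NR' := along_unit_natural (lw_lw_vcomp S S) NR.
have NL'' := along_unit_natural (lw_vcomp S) NL'.
have NR'' := along_unit_natural (lw_vcomp S) NR'.
apply: iff_trans (iff_sym (along_unit_eq _ _ NL NR)) _; try whiskering_functorial.
apply: iff_trans (iff_sym (along_unit_eq _ _ NL' NR')) _; try whiskering_functorial.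
apply: iff_trans (iff_sym (along_unit_eq (af := lw0) _ _ NL'' NR'')) _; try whiskering_functorial.
exact: transpose_eq transpose_M5l transpose_M5r.
Qed.

Lemma W6_iff_M6
  (NL : natural lw0 (lw2 S T) (fun W => lw S (mu_ W) ∘∘ nu_ (T ** W) ∘∘ lw S (sigma_ W)))
  (NR : natural lw0 (lw2 S T) (fun W => lw S (eta_ W))) :
  (forall W, lw S (mu_ W) ∘∘ nu_ (T ** W) ∘∘ lw S (sigma_ W) = lw S (eta_ W))
  <-> (forall W, mu_ (G ** W) ∘∘ lw T (eps_ (G ** W)) ∘∘ delta_ W = eta_ (G ** W)).
Proof.
apply: iff_trans (iff_sym (along_unit_eq _ _ NL NR)) (transpose_eq transpose_M6l transpose_eta);
  whiskering_functorial.
Qed.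

Lemma W7_iff_M7
  (NL : natural lw0 (lw2 S T)
          (fun W => lw S (mu_ W) ∘∘ nu_ (T ** W) ∘∘ lw S (lambda_ W)
                    ∘∘ sigma_ (S ** W)))
  (NR : natural lw0 (lw2 S T) (fun W => lw S (eta_ W))) :
  (forall W, lw S (mu_ W) ∘∘ nu_ (T ** W) ∘∘ lw S (lambda_ W) ∘∘ sigma_ (S ** W)
             = lw S (eta_ W))
  <-> (forall W, mu_ (G ** W) ∘∘ lw T (zeta_ W) ∘∘ lw T (lw G (eps_ W)) ∘∘ delta_ W
                 = eta_ (G ** W)).
Proof.
apply: iff_trans (iff_sym (along_unit_eq _ _ NL NR)) (transpose_eq transpose_M7l transpose_eta);
  whiskering_functorial.
Qed.

Definition lambda_of_zeta W : C (T ** (S ** W)) (S ** (T ** W)) :=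
  lw S (lw T (e_ W)) ∘∘ lw S (zeta_ (S ** W)) ∘∘ u_ (T ** (S ** W)).

Definition nu_of_delta W : C (S ** (S ** W)) (S ** (T ** W)) :=
  lw S (lw T (e_ W)) ∘∘ lw S (lw T (lw G (e_ (S ** W))))
  ∘∘ lw S (delta_ (S ** (S ** W))) ∘∘ u_ (S ** (S ** W)).

Lemma lambda_of_zeta_eq W : lambda_of_zeta W = lambda_ W.
Proof.
rewrite /lambda_of_zeta (tail_congr21 _ (zeta_transpose _)) vcompA -(lambda_natural (e_ W)).
by rewrite -vcompA -lw_vcomp triangle_S lw_id2 vcomp1r.
Qed.

Lemma nu_of_delta_eq W : nu_of_delta W = nu_ W.
Proof.
rewrite /nu_of_delta (tail_congr21 _ (delta_transpose _)) !vcompA.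
rewrite (tail_congr2 _ (esym (nu_natural (lw G (e_ (S ** W)))))) -(nu_natural (e_ W)).
rewrite (tail_congr21 _ (esym (lw_vcomp S (lw S (lw G (e_ (S ** W)))) (u_ _)))).
rewrite -(u_natural (e_ (S ** W))) (lw_vcomp S (u_ _) (e_ _)) !vcompA.
rewrite (tail_congr21 _ (esym (lw_vcomp S (lw S (e_ W)) (u_ _)))) triangle_S lw_id2 vcomp1r.
by rewrite (tail_congr21 _ (triangle_S _)) vcomp1r.
Qed.

Lemma mate_lambda_of_zeta W :
  e_ (T ** (G ** W)) ∘∘ lw G (lambda_of_zeta (G ** W)) ∘∘ lw G (lw T (u_ W)) = zeta_ W.
Proof.
rewrite /lambda_of_zeta !lw_vcomp !vcompA e_natural (tail_congr2 _ (e_natural _)).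
rewrite (tail_congr21 _ (triangle_G _)) vcomp1r (tail_congr2 _ (zeta_natural _)).
by rewrite -lw_vcomp triangle_G lw_id2 vcomp1l.
Qed.

Lemma mate_nu_of_delta W :
  e_ (T ** (G ** (G ** W))) ∘∘ lw G (nu_of_delta (G ** (G ** W)))
  ∘∘ lw G (lw S (u_ (G ** W))) ∘∘ lw G (u_ W) = delta_ W.
Proof.
rewrite /nu_of_delta !lw_vcomp !vcompA e_natural (tail_congr2 _ (e_natural _)).
rewrite (tail_congr2 _ (e_natural _)) (tail_congr21 _ (triangle_G _)) vcomp1r.
rewrite (tail_congr2 _ (delta_natural _)) (tail_congr2 _ (delta_natural _)).
rewrite (tail_congr21 _ (esym (lw_vcomp T (lw G (e_ _)) (lw G (lw G (lw S (u_ _))))))).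
rewrite -(lw_vcomp G (e_ _)) e_natural !lw_vcomp !vcompA.
rewrite -(lw_vcomp T (e_ _)) triangle_G lw_id2 vcomp1l.
by rewrite -!lw_vcomp triangle_G !lw_id2 vcomp1l.
Qed.

End FamilyMates.

Lemma and7_iff (P1 P2 P3 P4 P5 P6 P7 Q1 Q2 Q3 Q4 Q5 Q6 Q7 : Prop) :
  (P1 <-> Q1) -> (P2 <-> Q2) -> (P3 <-> Q3) -> (P4 <-> Q4) -> (P5 <-> Q5) ->
  (P6 <-> Q6) -> (P7 <-> Q7) ->
  (P1 /\ P2 /\ P3 /\ P4 /\ P5 /\ P6 /\ P7) <-> (Q1 /\ Q2 /\ Q3 /\ Q4 /\ Q5 /\ Q6 /\ Q7).
Proof. tauto. Qed.

Section Mates.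
Variables (K : TwoCategory) (A : Obj K).
Local Notation E := (Hom A A).
Local Notation C := (@Cell K A A).
Variables (T G S : E) (mu : C (T ** T) T) (eta : C (id1 A) T)
  (u : C (id1 A) (S ** G)) (e : C (G ** S) (id1 A)).
Hypothesis adj : is_adjunction u e.

Local Notation hI := (@presents_id1 K A).
Local Notation hT := (presents_self T).
Local Notation hG := (presents_self G).
Local Notation hS := (presents_self S).

Definition mu_at := component (presents_comp1 hT hT) hT mu.
Definition eta_at := component hI hT eta.
Definition u_at := component hI (presents_comp1 hS hG) u.
Definition e_at := component (presents_comp1 hG hS) hI e.
Definition nu_at nu := component (presents_comp1 hS hS) (presents_comp1 hS hT) nu.
Definition sigma_at sigma := component hI (presents_comp1 hS hT) sigma.
Definition lambda_at lambda := component (presents_comp1 hT hS) (presents_comp1 hS hT) lambda.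
Definition zeta_at zeta := component (presents_comp1 hG hT) (presents_comp1 hT hG) zeta.
Definition delta_at delta := component hG (presents_comp1 hT (presents_comp1 hG hG)) delta.
Definition eps_at eps := component hG hT eps.

Ltac component_naturality c :=
  lazymatch goal with |- component ?hX ?hY ?a _ ∘∘ _ = _ =>
    naturality (represents_component hX hY a) c
  end.

Lemma mu_at_natural W W' (c : C W W') : mu_at W' ∘∘ lw T (lw T c) = lw T c ∘∘ mu_at W.
Proof. rewrite /mu_at; component_naturality c. Qed.

Lemma eta_at_natural W W' (c : C W W') : eta_at W' ∘∘ c = lw T c ∘∘ eta_at W.
Proof. rewrite /eta_at; component_naturality c. Qed.

Lemma u_at_natural W W' (c : C W W') : u_at W' ∘∘ c = lw S (lw G c) ∘∘ u_at W.
Proof. rewrite /u_at; component_naturality c. Qed.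

Lemma e_at_natural W W' (c : C W W') : e_at W' ∘∘ lw G (lw S c) = c ∘∘ e_at W.
Proof. rewrite /e_at; component_naturality c. Qed.

Lemma nu_at_natural nu W W' (c : C W W') :
  nu_at nu W' ∘∘ lw S (lw S c) = lw S (lw T c) ∘∘ nu_at nu W.
Proof. rewrite /nu_at; component_naturality c. Qed.

Lemma sigma_at_natural sigma W W' (c : C W W') :
  sigma_at sigma W' ∘∘ c = lw S (lw T c) ∘∘ sigma_at sigma W.
Proof. rewrite /sigma_at; component_naturality c. Qed.

Lemma lambda_at_natural lambda W W' (c : C W W') :
  lambda_at lambda W' ∘∘ lw T (lw S c) = lw S (lw T c) ∘∘ lambda_at lambda W.
Proof. rewrite /lambda_at; component_naturality c. Qed.

Lemma zeta_at_natural zeta W W' (c : C W W') :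
  zeta_at zeta W' ∘∘ lw G (lw T c) = lw T (lw G c) ∘∘ zeta_at zeta W.
Proof. rewrite /zeta_at; component_naturality c. Qed.

Lemma delta_at_natural delta W W' (c : C W W') :
  delta_at delta W' ∘∘ lw G c = lw T (lw G (lw G c)) ∘∘ delta_at delta W.
Proof. rewrite /delta_at; component_naturality c. Qed.

Lemma triangle_G_at W : e_at (G ** W) ∘∘ lw G (u_at W) = id2 _.
Proof.
have Rtri : represents (lu G ∘∘ rw e G ∘∘ asc G S G ∘∘ lw G u ∘∘ ru' G)
  (fun W => e_at (G ** W) ∘∘ lw G (u_at W)) by represent.
by rewrite adj.1 in Rtri; apply: (represents_uniq Rtri (represents_id2 hG)).
Qed.

Lemma triangle_S_at W : lw S (e_at W) ∘∘ u_at (S ** W) = id2 _.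
Proof.
have Rtri : represents (ru S ∘∘ lw S e ∘∘ asc' S G S ∘∘ rw u S ∘∘ lu' S)
  (fun W => lw S (e_at W) ∘∘ u_at (S ** W)) by represent.
by rewrite adj.2 in Rtri; apply: (represents_uniq Rtri (represents_id2 hS)).
Qed.

Definition mate_zeta_at lambda W : C (G ** (T ** W)) (T ** (G ** W)) :=
  e_at (T ** (G ** W)) ∘∘ lw G (lambda_at lambda (G ** W)) ∘∘ lw G (lw T (u_at W)).
Definition mate_delta_at nu W : C (G ** W) (T ** (G ** (G ** W))) :=
  e_at (T ** (G ** (G ** W))) ∘∘ lw G (nu_at nu (G ** (G ** W)))
  ∘∘ lw G (lw S (u_at (G ** W))) ∘∘ lw G (u_at W).
Definition mate_eps_at sigma W : C (G ** W) (T ** W) :=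
  e_at (T ** W) ∘∘ lw G (sigma_at sigma W).

Lemma mate_zeta_at_transpose lambda W :
  lw S (mate_zeta_at lambda W) ∘∘ u_at (T ** W)
  = lambda_at lambda (G ** W) ∘∘ lw T (u_at W).
Proof.
rewrite -[RHS](untransposeK u_at_natural triangle_S_at) /transpose /untranspose.
by rewrite !lw_vcomp !vcompA.
Qed.

Lemma mate_delta_at_transpose nu W :
  lw S (mate_delta_at nu W) ∘∘ u_at W
  = nu_at nu (G ** (G ** W)) ∘∘ lw S (u_at (G ** W)) ∘∘ u_at W.
Proof.
rewrite -[RHS](untransposeK u_at_natural triangle_S_at) /transpose /untranspose.
by rewrite !lw_vcomp !vcompA.
Qed.

Lemma mate_eps_at_transpose sigma W : lw S (mate_eps_at sigma W) ∘∘ u_at W = sigma_at sigma W.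
Proof. exact: (untransposeK u_at_natural triangle_S_at). Qed.

Ltac natural_from Ra := rewrite /natural; let c := fresh "c" in intros ? ? c; naturality Ra c.

Ltac reduce_to_families phiL phiR psiL psiR :=
  lazymatch goal with |- (?a = ?b) <-> (?a' = ?b') =>
    let RL := fresh "RL" in let RR := fresh "RR" in
    let RML := fresh "RML" in let RMR := fresh "RMR" in
    (have RL : represents a phiL by represent);
    (have RR : represents b phiR by represent);
    (have RML : represents a' psiL by represent);
    (have RMR : represents b' psiR by represent);
    apply: iff_trans (represents_eq RL RR) _;
    apply: iff_trans _ (iff_sym (represents_eq RML RMR))
  end.

Ltac family_fact :=
  match goal with
  | Ra : represents _ _ |- natural _ _ _ => natural_from Ra
  | _ =>
      first [ exact: mu_at_natural | exact: eta_at_natural | exact: u_at_natural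
            | exact: e_at_natural | exact: nu_at_natural | exact: sigma_at_natural
            | exact: lambda_at_natural | exact: triangle_G_at | exact: triangle_S_at
            | exact: mate_zeta_at_transpose | exact: mate_delta_at_transpose
            | exact: mate_eps_at_transpose ]
  end.

Lemma wreath_iff_mixed_opwreath nu sigma lambda :
  is_wreath mu eta nu sigma lambda <->
  is_mixed_opwreath mu eta (mate_zeta u e lambda) (mate_delta u e nu) (mate_epsilon e sigma).
Proof.
apply: and7_iff.
- reduce_to_families (fun W => lambda_at lambda W ∘∘ mu_at (S ** W))
    (fun W => lw S (mu_at W) ∘∘ lambda_at lambda (T ** W) ∘∘ lw T (lambda_at lambda W))
    (fun W => mate_zeta_at lambda W ∘∘ lw G (mu_at W))
    (fun W => mu_at (G ** W) ∘∘ lw T (mate_zeta_at lambda W)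
              ∘∘ mate_zeta_at lambda (T ** W)).
  by apply: (W1_iff_M1 (u_ := u_at) (e_ := e_at)); family_fact.
- reduce_to_families (fun W => lambda_at lambda W ∘∘ eta_at (S ** W))
    (fun W => lw S (eta_at W))
    (fun W => mate_zeta_at lambda W ∘∘ lw G (eta_at W))
    (fun W => eta_at (G ** W)).
  by apply: (W2_iff_M2 (u_ := u_at) (e_ := e_at)); family_fact.
- reduce_to_families
    (fun W => lw S (mu_at W) ∘∘ lambda_at lambda (T ** W) ∘∘ lw T (sigma_at sigma W))
    (fun W => lw S (mu_at W) ∘∘ sigma_at sigma (T ** W))
    (fun W => mu_at W ∘∘ mate_eps_at sigma (T ** W))
    (fun W => mu_at W ∘∘ lw T (mate_eps_at sigma W) ∘∘ mate_zeta_at lambda W).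
  by apply: (W3_iff_M3 (u_ := u_at) (e_ := e_at)); family_fact.
- reduce_to_families
    (fun W => lw S (mu_at W) ∘∘ nu_at nu (T ** W) ∘∘ lw S (lambda_at lambda W)
              ∘∘ lambda_at lambda (S ** W))
    (fun W => lw S (mu_at W) ∘∘ lambda_at lambda (T ** W) ∘∘ lw T (nu_at nu W))
    (fun W => mu_at (G ** (G ** W)) ∘∘ lw T (mate_zeta_at lambda (G ** W))
              ∘∘ lw T (lw G (mate_zeta_at lambda W)) ∘∘ mate_delta_at nu (T ** W))
    (fun W => mu_at (G ** (G ** W)) ∘∘ lw T (mate_delta_at nu W) ∘∘ mate_zeta_at lambda W).
  by apply: (W4_iff_M4 (u_ := u_at) (e_ := e_at)); family_fact.
- reduce_to_families
    (fun W => lw S (mu_at W) ∘∘ nu_at nu (T ** W) ∘∘ lw S (nu_at nu W))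
    (fun W => lw S (mu_at W) ∘∘ nu_at nu (T ** W) ∘∘ lw S (lambda_at lambda W)
              ∘∘ nu_at nu (S ** W))
    (fun W => mu_at (G ** (G ** (G ** W))) ∘∘ lw T (mate_delta_at nu (G ** W))
              ∘∘ mate_delta_at nu W)
    (fun W => mu_at (G ** (G ** (G ** W))) ∘∘ lw T (mate_zeta_at lambda (G ** (G ** W)))
              ∘∘ lw T (lw G (mate_delta_at nu W)) ∘∘ mate_delta_at nu W).
  by apply: (W5_iff_M5 (u_ := u_at) (e_ := e_at)); family_fact.
- reduce_to_families
    (fun W => lw S (mu_at W) ∘∘ nu_at nu (T ** W) ∘∘ lw S (sigma_at sigma W))
    (fun W => lw S (eta_at W))
    (fun W => mu_at (G ** W) ∘∘ lw T (mate_eps_at sigma (G ** W)) ∘∘ mate_delta_at nu W)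
    (fun W => eta_at (G ** W)).
  by apply: (W6_iff_M6 (u_ := u_at) (e_ := e_at)); family_fact.
- reduce_to_families
    (fun W => lw S (mu_at W) ∘∘ nu_at nu (T ** W) ∘∘ lw S (lambda_at lambda W)
              ∘∘ sigma_at sigma (S ** W))
    (fun W => lw S (eta_at W))
    (fun W => mu_at (G ** W) ∘∘ lw T (mate_zeta_at lambda W)
              ∘∘ lw T (lw G (mate_eps_at sigma W)) ∘∘ mate_delta_at nu W)
    (fun W => eta_at (G ** W)).
  by apply: (W7_iff_M7 (u_ := u_at) (e_ := e_at)); family_fact.
Qed.

Definition comate_sigma (eps : C G T) : C (id1 A) (S ** T) := lw S eps ∘∘ u.

(* lambda = STe o S zeta S o uTS *)
Definition comate_lambda (zeta : C (G ** T) (T ** G)) : C (T ** S) (S ** T) :=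
  lw S (ru T) ∘∘ lw S (lw T e) ∘∘ lw S (asc' T G S) ∘∘ lw S (rw zeta S)
  ∘∘ lw S (asc G T S) ∘∘ asc' S G (T ** S) ∘∘ rw u (T ** S) ∘∘ lu' (T ** S).

(* nu = STe o STGeS o S delta SS o uSS *)
Definition comate_nu (delta : C G (T ** G ** G)) : C (S ** S) (S ** T) :=
  lw S (ru T) ∘∘ lw S (lw T e) ∘∘ lw S (lw T (lw G (lu S)))
  ∘∘ lw S (lw T (lw G (rw e S))) ∘∘ lw S (lw T (lw G (asc G S S)))
  ∘∘ lw S (lw T (asc' G G (S ** S))) ∘∘ lw S (asc' T (G ** G) (S ** S))
  ∘∘ lw S (rw delta (S ** S)) ∘∘ asc' S G (S ** S) ∘∘ rw u (S ** S) ∘∘ lu' (S ** S).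

Lemma mate_epsilonK : cancel (mate_epsilon e) comate_sigma.
Proof.
move=> sigma; apply: (represents_inj (phi := sigma_at sigma)); last exact: represents_component.
rewrite /comate_sigma; represent; exact: mate_eps_at_transpose.
Qed.

Lemma comate_sigmaK : cancel comate_sigma (mate_epsilon e).
Proof.
move=> eps; apply: (represents_inj (phi := eps_at eps)); last exact: represents_component.
rewrite /comate_sigma; represent; exact: (transposeK e_at_natural triangle_G_at).
Qed.

Lemma mate_zetaK : cancel (mate_zeta u e) comate_lambda.
Proof.
move=> lambda; apply: (represents_inj (phi := lambda_at lambda)); last exact: represents_component.
rewrite /comate_lambda; represent.
exact: (lambda_of_zeta_eq triangle_S_at (lambda_at_natural lambda)
         (mate_zeta_at_transpose lambda)).
Qed.

Lemma comate_lambdaK : cancel comate_lambda (mate_zeta u e).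
Proof.
move=> zeta; apply: (represents_inj (phi := zeta_at zeta)); last exact: represents_component.
rewrite /comate_lambda; represent.
exact: (mate_lambda_of_zeta e_at_natural triangle_G_at (zeta_at_natural zeta)).
Qed.

Lemma mate_deltaK : cancel (mate_delta u e) comate_nu.
Proof.
move=> nu; apply: (represents_inj (phi := nu_at nu)); last exact: represents_component.
rewrite /comate_nu; represent.
exact: (nu_of_delta_eq u_at_natural triangle_S_at (nu_at_natural nu)
         (mate_delta_at_transpose nu)).
Qed.

Lemma comate_nuK : cancel comate_nu (mate_delta u e).
Proof.
move=> delta; apply: (represents_inj (phi := delta_at delta)); last exact: represents_component.
rewrite /comate_nu; represent.
exact: (mate_nu_of_delta e_at_natural triangle_G_at (delta_at_natural delta)).
Qed.

Lemma mate_bijective : bijective (mate (T:=T) u e).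
Proof.
exists (fun w => let: (zeta, delta, eps) := w in
                 (comate_nu delta, comate_sigma eps, comate_lambda zeta)).
- by case=> [[nu sigma] lambda] /=; rewrite mate_deltaK mate_epsilonK mate_zetaK.
- by case=> [[zeta delta] eps] /=; rewrite comate_nuK comate_sigmaK comate_lambdaK.
Qed.

End Mates.

Theorem proposition3p4 (K : TwoCategory) (A : Obj K)
  (T : Hom A A) (mu : Cell (comp1 T T) T) (eta : Cell (id1 A) T)
  (G S : Hom A A) (u : Cell (id1 A) (comp1 S G)) (e : Cell (comp1 G S) (id1 A)) :
  is_monad mu eta ->
  is_adjunction u e ->
  bijective (mate (T:=T) u e) /\
  (forall (nu : Cell (comp1 S S) (comp1 S T)) (sigma : Cell (id1 A) (comp1 S T))
          (lambda : Cell (comp1 T S) (comp1 S T)),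
      is_wreath mu eta nu sigma lambda <->
      is_mixed_opwreath mu eta (mate_zeta (T:=T) u e lambda) (mate_delta (T:=T) u e nu)
        (mate_epsilon (T:=T) e sigma)).
Proof.
move=> _ adj; split; first exact: mate_bijective.
by move=> nu sigma lambda; apply: wreath_iff_mixed_opwreath.
Qed.
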